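(* There is a coreflection $\mathcal{S}\ell\dashv\bigwedge C^{op}$ between the category $\mathbf{Frm}$ of frames and the category of strong topological coframes; that is, $\mathcal S\ell:\mathbf{Frm}\to\mathbf{StrTopCoFrm}$ is left adjoint to $\bigwedge C^{op}$, and the unit $\Omega\to\bigwedge C^{op}(\mathcal S\ell(\Omega))$, $u\mapsto\mathfrak c(u)$, is an isomorphism.
   Context: A coframe is a complete lattice in which arbitrary infima distribute over binary suprema; coframe morphisms preserve arbitrary infima and finite suprema. A topological coframe is a coframe $L$ with a sublattice $C(L)$ of complemented elements (its closed elements); morphisms are coframe morphisms $\varphi$ with $\varphi(C(L))\subseteq C(L')$. A topological coframe is strong if $C(L)$ is closed under arbitrary infima taken in $L$; $\mathbf{StrTopCoFrm}$ denotes the full subcategory of strong ones. The functor $\bigwedge C^{op}$ sends a topological coframe $L$ to the frame $(\bigwedge C(L))^{op}$, where $\bigwedge C(L)$ is the set of infima of elements of $C(L)$ (a subcoframe of $L$), and acts on morphisms by restriction. For a frame $\Omega$, a sublocale is a subset $S\subseteq\Omega$ closed under arbitrary meets and such that $u\Rightarrow s\in S$ for all $u\in\Omega$, $s\in S$ ($\Rightarrow$ the Heyting implication); the sublocales ordered by inclusion form a coframe $\mathcal S\ell(\Omega)$. For $u\in\Omega$, the closed sublocale is $\mathfrak c(u)={\uparrow}u$; it is complemented in $\mathcal S\ell(\Omega)$ and $\mathfrak c:\Omega^{op}\to\mathcal S\ell(\Omega)$ is a coframe order-embedding. $\mathcal S\ell(\Omega)$ is made a topological coframe by $C(\mathcal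 S\ell(\Omega))=\{\mathfrak c(u):u\in\Omega\}$; for a frame morphism $\varphi:\Omega\to\Omega'$, $\mathcal S\ell(\varphi)$ is the unique coframe morphism $\mathcal S\ell(\Omega)\to\mathcal S\ell(\Omega')$ with $\mathfrak c(u)\mapsto\mathfrak c(\varphi(u))$. *)

From Stdlib Require Import PropExtensionality FunctionalExtensionality ProofIrrelevance.

Record CLat := {
  car :> Type;
  le : car -> car -> Prop;
  le_refl : forall x, le x x;
  le_trans : forall x y z, le x y -> le y z -> le x z;
  le_antisym : forall x y, le x y -> le y x -> x = y;
  sup : (car -> Prop) -> car;
  sup_ub : forall A x, A x -> le x (sup A);
  sup_least : forall A y, (forall x, A x -> le x y) -> le (sup A) y;
  inf : (car -> Prop) -> car;
  inf_lb : forall A x, A x -> le (inf A) x;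
  inf_greatest : forall A y, (forall x, A x -> le y x) -> le y (inf A) }.

Arguments le {c} _ _.
Arguments sup {c} _.
Arguments inf {c} _.
Arguments le_refl {c} _.
Arguments le_trans {c} _ _ _ _ _.
Arguments le_antisym {c} _ _ _ _.
Arguments sup_ub {c} _ _ _.
Arguments sup_least {c} _ _ _.
Arguments inf_lb {c} _ _ _.
Arguments inf_greatest {c} _ _ _.

Section Ops.
Context {L : CLat}.
Definition top : L := sup (fun _ => True).
Definition bot : L := inf (fun _ => True).
Definition meet (x y : L) : L := inf (fun z => z = x \/ z = y).
Definition join (x y : L) : L := sup (fun z => z = x \/ z = y).
Definition imp (u s : L) : L := sup (fun w => le (meet w u) s).
Definition complemented (x : L) : Prop :=
  exists y, meet x y = bot /\ join x y = top.
End Ops.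

Definition image {A B : Type} (f : A -> B) (P : A -> Prop) : B -> Prop :=
  fun y => exists x, P x /\ y = f x.

Definition is_frame (L : CLat) : Prop :=
  forall (x : L) (A : L -> Prop), meet x (sup A) = sup (image (meet x) A).

Definition is_coframe (L : CLat) : Prop :=
  forall (x : L) (A : L -> Prop), join x (inf A) = inf (image (join x) A).

Definition frame_hom {L M : CLat} (f : L -> M) : Prop :=
  (forall A : L -> Prop, f (sup A) = sup (image f A)) /\
  f top = top /\
  (forall x y : L, f (meet x y) = meet (f x) (f y)).

Definition coframe_hom {L M : CLat} (f : L -> M) : Prop :=
  (forall A : L -> Prop, f (inf A) = inf (image f A)) /\
  f bot = bot /\
  (forall x y : L, f (join x y) = join (f x) (f y)).

Definition is_topcoframe (L : CLat) (C : L -> Prop) : Prop :=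
  is_coframe L /\
  (forall x, C x -> complemented x) /\
  C bot /\ C top /\
  (forall x y, C x -> C y -> C (meet x y)) /\
  (forall x y, C x -> C y -> C (join x y)).

Definition is_strong (L : CLat) (C : L -> Prop) : Prop :=
  forall A : L -> Prop, (forall x, A x -> C x) -> C (inf A).

Definition topcoframe_hom {L M : CLat} (C : L -> Prop) (D : M -> Prop)
  (f : L -> M) : Prop :=
  coframe_hom f /\ (forall x, C x -> D (f x)).

Definition InfC (L : CLat) (C : L -> Prop) (x : L) : Prop :=
  exists A : L -> Prop, (forall y, A y -> C y) /\ x = inf A.

Lemma InfC_inf (L : CLat) (C : L -> Prop) (S : L -> Prop) :
  (forall x, S x -> InfC L C x) -> InfC L C (inf S).
Proof.
  intros HS.
  exists (fun c => C c /\ exists s, S s /\ le s c); split.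
  - intros y [Hy _]; exact Hy.
  - apply le_antisym.
    + apply inf_greatest; intros c [_ [s [Hs Hsc]]].
      eapply le_trans; [apply inf_lb; exact Hs | exact Hsc].
    + apply inf_greatest; intros s Hs.
      destruct (HS s Hs) as [A [HA ->]].
      apply inf_greatest; intros c Hc.
      apply inf_lb; split; [exact (HA c Hc)|].
      exists (inf A); split; [exact Hs | apply inf_lb; exact Hc].
Qed.

Definition InfCT (L : CLat) (C : L -> Prop) := {x : L | InfC L C x}.

Lemma InfCT_eq (L : CLat) (C : L -> Prop) (x y : InfCT L C) :
  proj1_sig x = proj1_sig y -> x = y.
Proof.
  destruct x as [x Hx], y as [y Hy]; simpl; intros ->.
  f_equal; apply proof_irrelevance.
Qed.

(** The frame (/\ C(L))^op as a complete lattice: reversed order; joins are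
    infima taken in L, meets are joins taken inside /\ C(L). *)
Definition InfCop (L : CLat) (C : L -> Prop) : CLat.
Proof.
  refine {|
    car := InfCT L C;
    le := fun x y => le (proj1_sig y) (proj1_sig x);
    sup := fun A => exist _ (inf (fun z => exists a, A a /\ z = proj1_sig a)) _;
    inf := fun A => exist _ (inf (fun z => InfC L C z /\
                                   forall a, A a -> le (proj1_sig a) z)) _ |}.
  - intros x; apply le_refl.
  - intros x y z H1 H2; eapply le_trans; eassumption.
  - intros x y H1 H2; apply InfCT_eq; apply le_antisym; assumption.
  - intros A x Hx; simpl; apply inf_lb; exists x; split; auto.
  - intros A y H; simpl; apply inf_greatest; intros z [a [Ha ->]]; apply H; exact Ha.
  - intros A x Hx; simpl; apply inf_greatest; intros z [_ Hz]; apply Hz; exact Hx.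
  - intros A y H; simpl; apply inf_lb; split; [exact (proj2_sig y)|].
    intros a Ha; apply H; exact Ha.
  Unshelve.
  + apply InfC_inf; intros z [a [_ ->]]; exact (proj2_sig a).
  + apply InfC_inf; intros z [Hz _]; exact Hz.
Defined.

Definition sublocale (O : CLat) (S : O -> Prop) : Prop :=
  (forall A : O -> Prop, (forall x, A x -> S x) -> S (inf A)) /\
  (forall u s : O, S s -> S (imp u s)).

Definition SlT (O : CLat) := {S : O -> Prop | sublocale O S}.

Lemma SlT_eq (O : CLat) (S T : SlT O) :
  (forall x, proj1_sig S x <-> proj1_sig T x) -> S = T.
Proof.
  destruct S as [S HS], T as [T HT]; simpl; intros H.
  assert (S = T) as <-.
  { apply functional_extensionality; intros x; apply propositional_extensionality; apply H. }
  f_equal; apply proof_irrelevance.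
Qed.

Lemma sublocale_cap (O : CLat) (P : SlT O -> Prop) :
  sublocale O (fun x => forall S, P S -> proj1_sig S x).
Proof.
  split.
  - intros A HA S HS. apply (proj1 (proj2_sig S)). intros x Hx; exact (HA x Hx S HS).
  - intros u s Hs S HS. apply (proj2 (proj2_sig S)). exact (Hs S HS).
Qed.

Definition Sl (O : CLat) : CLat.
Proof.
  refine {|
    car := SlT O;
    le := fun S T => forall x, proj1_sig S x -> proj1_sig T x;
    sup := fun F => exist _ (fun x => forall T : SlT O,
              (forall S, F S -> forall y, proj1_sig S y -> proj1_sig T y) ->
              proj1_sig T x) (sublocale_cap O _);
    inf := fun F => exist _ (fun x => forall S, F S -> proj1_sig S x)
              (sublocale_cap O F) |}.
  - intros S x H; exact H.
  - intros S T U H1 H2 x Hx; auto.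
  - intros S T H1 H2; apply SlT_eq; split; auto.
  - intros F S HS x Hx T HT; simpl; exact (HT S HS x Hx).
  - intros F T HT x Hx; simpl in Hx; exact (Hx T HT).
  - intros F S HS x Hx; simpl in Hx; exact (Hx S HS).
  - intros F T HT x Hx S HS; exact (HT S HS x Hx).
Defined.

Lemma meet_lb_l (L : CLat) (x y : L) : le (meet x y) x.
Proof. apply inf_lb; left; reflexivity. Qed.

Lemma closed_sublocale (O : CLat) (u : O) : sublocale O (fun x => le u x).
Proof.
  split.
  - intros A HA; apply inf_greatest; exact HA.
  - intros v s Hs. eapply le_trans; [|apply sup_ub].
    + apply le_refl.
    + simpl. eapply le_trans; [apply meet_lb_l | exact Hs].
Qed.

Definition cl {O : CLat} (u : O) : Sl O :=
  exist (sublocale O) (fun x => le u x) (closed_sublocale O u).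

Definition ClS (O : CLat) (S : Sl O) : Prop := exists u : O, S = cl u.

(* Every sublocale S of a frame O is the intersection of the sublocales
   c(a) \/ o(b) containing it, where o(b) = {n | b -> n = n} is the open complement
   of c(b).  Let F : O -> L send joins to meets, meets to joins and top to bottom, with
   complemented values in a coframe L, N b the complement of F b.  A coframe morphism
   g with g(c(u)) = F u must send o(b) to N b, hence
   g(S) = /\ {F a \/ N b | S <= c(a) \/ o(b)};  conversely this formula defines a coframe
   morphism, the key estimate being /\_K (F a \/ N b) <= F x \/ N z whenever the
   intersection of the c(a) \/ o(b), (a, b) in K, lies in c(x) \/ o(z).  Taking for L a
   strong topological coframe and for F a frame morphism into (/\C(L))^op gives the
   adjunction; Sl(O) is strong because an intersection of closed sublocales c(u_i) is
   c(\/ u_i), and this makes the unit u |-> c(u) an isomorphism onto /\C(Sl(O)). *)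

From Stdlib Require Import PropExtensionality FunctionalExtensionality.

Section Lattice.
Context {L : CLat}.
Implicit Types x y z a b : L.

Lemma eq_le x y : x = y -> le x y.
Proof. intros ->; apply le_refl. Qed.

Lemma meet_lb_r x y : le (meet x y) y.
Proof. apply inf_lb; right; reflexivity. Qed.

Lemma meet_glb x y z : le z x -> le z y -> le z (meet x y).
Proof. intros H1 H2; apply inf_greatest; intros w [-> | ->]; assumption. Qed.

Lemma join_ub_l x y : le x (join x y).
Proof. apply sup_ub; left; reflexivity. Qed.

Lemma join_ub_r x y : le y (join x y).
Proof. apply sup_ub; right; reflexivity. Qed.

Lemma join_lub x y z : le x z -> le y z -> le (join x y) z.
Proof. intros H1 H2; apply sup_least; intros w [-> | ->]; assumption. Qed.

Lemma top_max x : le x top.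
Proof. apply sup_ub; exact I. Qed.

Lemma bot_min x : le bot x.
Proof. apply inf_lb; exact I. Qed.

Lemma le_top_eq x : le top x -> x = top.
Proof. intros H; apply le_antisym; [apply top_max | exact H]. Qed.

Lemma le_bot_eq x : le x bot -> x = bot.
Proof. intros H; apply le_antisym; [exact H | apply bot_min]. Qed.

Lemma inf_ext (P Q : L -> Prop) : (forall z, P z <-> Q z) -> inf P = inf Q.
Proof.
  intros H; f_equal; apply functional_extensionality; intros z.
  apply propositional_extensionality, H.
Qed.

Lemma sup_ext (P Q : L -> Prop) : (forall z, P z <-> Q z) -> sup P = sup Q.
Proof.
  intros H; f_equal; apply functional_extensionality; intros z.
  apply propositional_extensionality, H.
Qed.

Lemma inf_empty : inf (fun _ : L => False) = top.
Proof. apply le_top_eq, inf_greatest; intros _ []. Qed.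

Lemma sup_empty : sup (fun _ : L => False) = bot.
Proof. apply le_bot_eq, sup_least; intros _ []. Qed.

Lemma inf_up a : inf (fun x => le a x) = a.
Proof.
  apply le_antisym; [apply inf_lb, le_refl|].
  apply inf_greatest; intros x Hx; exact Hx.
Qed.

Lemma meet_comm x y : meet x y = meet y x.
Proof. apply inf_ext; intros; tauto. Qed.

Lemma join_comm x y : join x y = join y x.
Proof. apply sup_ext; intros; tauto. Qed.

Lemma meet_top_l x : meet top x = x.
Proof. apply le_antisym; [apply meet_lb_r | apply meet_glb; [apply top_max | apply le_refl]]. Qed.

Lemma meet_top_r x : meet x top = x.
Proof. rewrite meet_comm; apply meet_top_l. Qed.

Lemma join_bot_r x : join x bot = x.
Proof. apply le_antisym; [apply join_lub; [apply le_refl | apply bot_min] | apply join_ub_l]. Qed.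

Lemma join_bot_l x : join bot x = x.
Proof. rewrite join_comm; apply join_bot_r. Qed.

Lemma meet_mono a a' b b' : le a a' -> le b b' -> le (meet a b) (meet a' b').
Proof.
  intros Ha Hb; apply meet_glb.
  - eapply le_trans; [apply meet_lb_l | exact Ha].
  - eapply le_trans; [apply meet_lb_r | exact Hb].
Qed.

Lemma join_mono a a' b b' : le a a' -> le b b' -> le (join a b) (join a' b').
Proof.
  intros Ha Hb; apply join_lub.
  - eapply le_trans; [exact Ha | apply join_ub_l].
  - eapply le_trans; [exact Hb | apply join_ub_r].
Qed.

Lemma image_pair {M : Type} (f : L -> M) x y (w : M) :
  image f (fun z => z = x \/ z = y) w <-> w = f x \/ w = f y.
Proof.
  split.
  - intros [v [[-> | ->] ->]]; auto.
  - intros [-> | ->]; [exists x | exists y]; auto.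
Qed.

End Lattice.

Lemma image_comp {A B D : Type} (f : B -> D) (h : A -> B) (P : A -> Prop) :
  image (fun x => f (h x)) P = image f (image h P).
Proof.
  apply functional_extensionality; intros z; apply propositional_extensionality; split.
  - intros [x [Hx ->]]. exists (h x); split; [exists x; split; [exact Hx | reflexivity] | reflexivity].
  - intros [y [[x [Hx ->]] ->]]. exists x; split; [exact Hx | reflexivity].
Qed.

Section Coframe.
Context {L : CLat} (HL : is_coframe L).
Implicit Types a b c d e w y : L.

Lemma join_meet_distr a b c : join a (meet b c) = meet (join a b) (join a c).
Proof. unfold meet at 1; rewrite HL. apply inf_ext; intros; apply image_pair. Qed.

Lemma meet_join_distr_le a b c : le (meet b (join a c)) (join (meet a b) (meet b c)).
Proof.
  rewrite join_meet_distr. apply meet_glb.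
  - eapply le_trans; [apply meet_lb_l | apply join_ub_r].
  - rewrite (join_comm (meet a b)), join_meet_distr. apply meet_glb.
    + rewrite join_comm; apply meet_lb_r.
    + eapply le_trans; [apply meet_lb_l | apply join_ub_r].
Qed.

Lemma meet_join_disjoint_le c d w : meet c d = bot -> le (meet (join c w) d) w.
Proof.
  intros H. eapply le_trans; [|apply eq_le, join_bot_r].
  rewrite <- H, join_meet_distr.
  apply meet_mono; [rewrite join_comm; apply le_refl | apply join_ub_r].
Qed.

Lemma le_join_of_meet_le c d y w : join c d = top -> le (meet y c) w -> le y (join w d).
Proof.
  intros Hcd H. apply le_trans with (join d (meet y c)).
  - rewrite join_meet_distr. apply meet_glb; [apply join_ub_r|].
    rewrite join_comm, Hcd; apply top_max.
  - rewrite join_comm. apply join_mono; [exact H | apply le_refl].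
Qed.

Lemma join_inf_inf (P Q : L -> Prop) y :
  (forall p q, P p -> Q q -> le y (join p q)) -> le y (join (inf P) (inf Q)).
Proof.
  intros H. rewrite HL. apply inf_greatest; intros w [q [Hq ->]].
  rewrite join_comm, HL. apply inf_greatest; intros w [p [Hp ->]].
  rewrite join_comm; auto.
Qed.

Lemma compl_unique c d d' : meet c d = bot -> join c d = top ->
  meet c d' = bot -> join c d' = top -> d = d'.
Proof.
  assert (K : forall e e', join c e = top -> meet c e' = bot -> le e' e).
  { intros e e' He He'. eapply le_trans; [|apply eq_le, join_bot_r].
    rewrite <- He', join_meet_distr. apply meet_glb.
    - rewrite join_comm, He; apply top_max.
    - apply join_ub_r. }
  intros; apply le_antisym; apply K; assumption.
Qed.

Lemma compl_meet_le c c' d d' e : meet (meet c c') e = bot ->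
  join c d = top -> join c' d' = top -> le e (join d d').
Proof.
  intros He Hd Hd'. rewrite join_comm. apply (le_join_of_meet_le c d); [exact Hd|].
  rewrite <- (join_bot_l d'). apply (le_join_of_meet_le c' d'); [exact Hd'|].
  rewrite <- He. apply meet_glb; [apply meet_glb|].
  - eapply le_trans; [apply meet_lb_l | apply meet_lb_r].
  - apply meet_lb_r.
  - eapply le_trans; apply meet_lb_l.
Qed.

(* Complements in a distributive lattice are unique, so this join of all
   complements of [c] is the complement of [c] whenever it exists. *)
Definition complement c : L := sup (fun d => meet c d = bot /\ join c d = top).

Lemma complement_spec c : complemented c ->
  meet c (complement c) = bot /\ join c (complement c) = top.
Proof.
  intros [d [Hm Hj]].
  assert (E : complement c = d).
  { apply le_antisym.
    - apply sup_least; intros d' [Hm' Hj']. apply eq_le; symmetry.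
      apply (compl_unique c); assumption.
    - apply sup_ub; split; assumption. }
  rewrite E; split; assumption.
Qed.

End Coframe.

Section Frame.
Context {O : CLat} (HO : is_frame O).
Implicit Types a b m n p s u w z : O.

Lemma meet_join_distr a b c : meet a (join b c) = join (meet a b) (meet a c).
Proof. unfold join at 1; rewrite HO. apply sup_ext; intros; apply image_pair. Qed.

Lemma imp_adj w u s : le (meet w u) s <-> le w (imp u s).
Proof.
  split; intros H.
  - apply sup_ub; exact H.
  - eapply le_trans; [apply meet_mono; [exact H | apply le_refl]|].
    rewrite meet_comm; unfold imp at 1; rewrite HO.
    apply sup_least; intros v [w' [Hw' ->]]. rewrite meet_comm; exact Hw'.
Qed.

Lemma imp_intro w u s : le (meet w u) s -> le w (imp u s).
Proof. apply imp_adj. Qed.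

Lemma imp_mp_r u s : le (meet (imp u s) u) s.
Proof. apply imp_adj, le_refl. Qed.

Lemma imp_mp u s : le (meet u (imp u s)) s.
Proof. rewrite meet_comm; apply imp_mp_r. Qed.

Lemma le_imp s u : le s (imp u s).
Proof. apply imp_intro, meet_lb_l. Qed.

Lemma imp_top u s : le u s -> imp u s = top.
Proof. intros H; apply le_top_eq, imp_intro. eapply le_trans; [apply meet_lb_r | exact H]. Qed.

Lemma imp_mono_r u s s' : le s s' -> le (imp u s) (imp u s').
Proof. intros H; apply imp_intro; eapply le_trans; [apply imp_mp_r | exact H]. Qed.

Lemma imp_anti_l u u' s : le u' u -> le (imp u s) (imp u' s).
Proof.
  intros H; apply imp_intro.
  eapply le_trans; [apply meet_mono; [apply le_refl | exact H] | apply imp_mp_r].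
Qed.

Lemma imp_meet u m n : imp u (meet m n) = meet (imp u m) (imp u n).
Proof.
  apply le_antisym.
  - apply meet_glb; apply imp_mono_r; [apply meet_lb_l | apply meet_lb_r].
  - apply imp_intro; apply meet_glb.
    + eapply le_trans; [apply meet_mono; [apply meet_lb_l | apply le_refl] | apply imp_mp_r].
    + eapply le_trans; [apply meet_mono; [apply meet_lb_r | apply le_refl] | apply imp_mp_r].
Qed.

Lemma imp_meet_of_le s m n : le s m -> imp s (meet m n) = imp s n.
Proof. intros H. rewrite imp_meet, (imp_top s m H). apply meet_top_l. Qed.

Lemma imp_idem z p : imp z (imp z p) = imp z p.
Proof.
  apply le_antisym; [|apply le_imp].
  apply imp_intro.
  eapply le_trans; [apply meet_glb; [apply imp_mp_r | apply meet_lb_r] | apply imp_mp_r].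
Qed.

Lemma imp_curry u z n : le (imp u (imp z n)) (imp z (imp u n)).
Proof.
  apply imp_intro, imp_intro.
  eapply le_trans; [|apply (imp_mp_r z n)]. apply meet_glb.
  - eapply le_trans; [|apply (imp_mp_r u (imp z n))].
    apply meet_mono; [apply meet_lb_l | apply le_refl].
  - eapply le_trans; [apply meet_lb_l | apply meet_lb_r].
Qed.

End Frame.

Section Sublocales.
Context {O : CLat} (HO : is_frame O).
Implicit Types a b m n p q u z : O.

Lemma sublocale_top (S : O -> Prop) : sublocale O S -> S top.
Proof. intros [H _]; rewrite <- inf_empty; apply H; intros _ []. Qed.

Lemma sublocale_meet (S : O -> Prop) m n : sublocale O S -> S m -> S n -> S (meet m n).
Proof. intros [H _] Hm Hn; apply H; intros x [-> | ->]; assumption. Qed.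

Definition meet_set (S T : O -> Prop) (p : O) : Prop :=
  exists m n, S m /\ T n /\ p = meet m n.

Lemma sublocale_meet_set (S T : O -> Prop) :
  sublocale O S -> sublocale O T -> sublocale O (meet_set S T).
Proof.
  intros HS HT. split.
  - intros A HA.
    exists (inf (fun m => S m /\ exists p, A p /\ le p m)),
           (inf (fun n => T n /\ exists p, A p /\ le p n)).
    split; [apply (proj1 HS); intros x [Hx _]; exact Hx|].
    split; [apply (proj1 HT); intros x [Hx _]; exact Hx|].
    apply le_antisym.
    + apply meet_glb; apply inf_greatest; intros m [_ [p [Hp Hpm]]];
        (eapply le_trans; [apply inf_lb; exact Hp | exact Hpm]).
    + apply inf_greatest; intros p Hp.
      destruct (HA p Hp) as [m [n [Hm [Hn ->]]]].
      apply meet_mono; apply inf_lb;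
        (split; [assumption | exists (meet m n); split; [exact Hp|]]);
        [apply meet_lb_l | apply meet_lb_r].
  - intros u p [m [n [Hm [Hn ->]]]].
    exists (imp u m), (imp u n).
    split; [apply (proj2 HS); exact Hm|].
    split; [apply (proj2 HT); exact Hn|].
    apply imp_meet, HO.
Qed.

Definition oset (z n : O) : Prop := n = imp z n.

Lemma sublocale_oset z : sublocale O (oset z).
Proof.
  split.
  - intros A HA. apply le_antisym; [apply le_imp, HO|].
    apply inf_greatest; intros n Hn.
    eapply le_trans; [apply (imp_mono_r HO), inf_lb, Hn | apply eq_le; symmetry; apply HA, Hn].
  - intros u n Hn. apply le_antisym; [apply le_imp, HO|].
    eapply le_trans; [apply (imp_curry HO) | apply (imp_mono_r HO)].
    apply eq_le; symmetry; exact Hn.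
Qed.

(* The points of c(a) \/ o(b). *)
Definition basic (a b : O) : O -> Prop := meet_set (fun m => le a m) (oset b).

Lemma basic_iff a b p : basic a b p <-> le (meet (join a p) (imp b p)) p.
Proof.
  split.
  - intros [m [n [Hm [Hn ->]]]]. apply meet_mono.
    + apply join_lub; [exact Hm | apply meet_lb_l].
    + eapply le_trans; [apply (imp_mono_r HO), meet_lb_r | apply eq_le; symmetry; exact Hn].
  - intros H. exists (join a p), (imp b p).
    split; [apply join_ub_l|].
    split; [symmetry; apply imp_idem, HO|].
    apply le_antisym; [apply meet_glb; [apply join_ub_r | apply le_imp, HO] | exact H].
Qed.

Lemma basic_anti a a' b b' p : le a' a -> le b b' -> basic a b p -> basic a' b' p.
Proof.
  intros Ha Hb H. apply basic_iff; apply basic_iff in H.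
  eapply le_trans; [|exact H]. apply meet_mono.
  - apply join_mono; [exact Ha | apply le_refl].
  - apply imp_anti_l; assumption.
Qed.

Lemma le_of_basic a z p : le z p -> basic a z p -> le a p.
Proof.
  intros Hz H; apply basic_iff in H. eapply le_trans; [|exact H].
  apply meet_glb; [apply join_ub_l|]. rewrite imp_top by assumption; apply top_max.
Qed.

Lemma basic_bot u p : le u p -> basic u bot p.
Proof.
  intros H; apply basic_iff. eapply le_trans; [apply meet_lb_l|].
  apply join_lub; [exact H | apply le_refl].
Qed.

Lemma basic_diag z p : basic z z p.
Proof.
  apply basic_iff. rewrite meet_comm, meet_join_distr by exact HO.
  apply join_lub; [apply imp_mp_r, HO | apply meet_lb_r].
Qed.

Lemma sublocale_basic a b : sublocale O (basic a b).
Proof. apply sublocale_meet_set; [apply closed_sublocale | apply sublocale_oset]. Qed.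

(* A point p outside S is excluded by c(nu) \/ o(p), nu the least point of S above p. *)
Lemma sublocale_basic_repr (S : O -> Prop) p : sublocale O S ->
  (forall a b, (forall q, S q -> basic a b q) -> basic a b p) -> S p.
Proof.
  intros HS H.
  set (nu := inf (fun s => S s /\ le p s)).
  assert (Hnu : S nu) by (apply (proj1 HS); intros x [Hx _]; exact Hx).
  assert (Hpnu : le p nu) by (apply inf_greatest; intros x [_ Hx]; exact Hx).
  assert (HB : basic nu p p).
  { apply H. intros s Hs. apply basic_iff.
    rewrite meet_comm, meet_join_distr by exact HO. apply join_lub; [|apply meet_lb_r].
    eapply le_trans; [apply meet_mono; [apply le_refl | apply inf_lb] | apply imp_mp, HO].
    split; [apply (proj2 HS), Hs | apply imp_intro, imp_mp; exact HO]. }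
  replace p with nu; [exact Hnu|].
  apply le_antisym; [|exact Hpnu]. eapply le_of_basic; [apply le_refl | exact HB].
Qed.

End Sublocales.

Section SublocaleCoframe.
Context {O : CLat} (HO : is_frame O).
Implicit Types a b p u x y z : O.

Definition opn (z : O) : Sl O := exist _ (oset z) (sublocale_oset HO z).

Lemma Sl_join_iff (S T : Sl O) p :
  proj1_sig (join S T) p <-> meet_set (proj1_sig S) (proj1_sig T) p.
Proof.
  split.
  - intros Hp.
    apply (Hp (exist _ _ (sublocale_meet_set HO _ _ (proj2_sig S) (proj2_sig T)))).
    intros U [-> | ->] x Hx; simpl.
    + exists x, top. split; [exact Hx|]. split; [apply sublocale_top, proj2_sig|].
      symmetry; apply meet_top_r.
    + exists top, x. split; [apply sublocale_top, proj2_sig|]. split; [exact Hx|].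
      symmetry; apply meet_top_l.
  - intros [m [n [Hm [Hn ->]]]]. apply sublocale_meet; [apply proj2_sig | |].
    + exact (join_ub_l S T m Hm).
    + exact (join_ub_r S T n Hn).
Qed.

Lemma Sl_bot_iff p : proj1_sig (bot : Sl O) p <-> p = top.
Proof.
  split.
  - intros H. apply le_top_eq. exact (H (cl top) I).
  - intros -> S _. apply sublocale_top, proj2_sig.
Qed.

Lemma cl_sup (A : O -> Prop) : cl (sup A) = inf (image cl A).
Proof.
  apply SlT_eq; intros p; split.
  - intros H S [a [Ha ->]]. simpl. eapply le_trans; [apply sup_ub; exact Ha | exact H].
  - intros H. simpl. apply sup_least; intros a Ha. exact (H (cl a) (ex_intro _ a (conj Ha eq_refl))).
Qed.

Lemma cl_top : cl (top : O) = bot.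
Proof.
  apply SlT_eq; intros p. rewrite Sl_bot_iff. simpl.
  split; [apply le_top_eq | intros ->; apply le_refl].
Qed.

Lemma cl_bot : cl (bot : O) = top.
Proof.
  apply SlT_eq; intros p; simpl; split; intros _; [|apply bot_min].
  exact (top_max (cl bot) p (bot_min p)).
Qed.

Lemma cl_meet x y : join (cl x) (cl y) = cl (meet x y).
Proof.
  apply SlT_eq; intros p. rewrite Sl_join_iff. simpl; split.
  - intros [m [n [Hm [Hn ->]]]]. apply meet_mono; assumption.
  - intros H. exists (join p x), (join p y).
    split; [apply join_ub_r|]. split; [apply join_ub_r|].
    apply le_antisym; [apply meet_glb; apply join_ub_l|].
    rewrite meet_join_distr by exact HO. apply join_lub; [apply meet_lb_r|].
    rewrite meet_comm, meet_join_distr by exact HO. apply join_lub; [apply meet_lb_r|].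
    rewrite meet_comm; exact H.
Qed.

Lemma cl_join x y : meet (cl x) (cl y) = cl (join x y).
Proof.
  apply SlT_eq; intros p; simpl; split.
  - intros H. apply join_lub; [exact (H (cl x) (or_introl eq_refl)) | exact (H (cl y) (or_intror eq_refl))].
  - intros H S [-> | ->]; simpl; (eapply le_trans; [|exact H]); [apply join_ub_l | apply join_ub_r].
Qed.

Lemma cl_opn_meet z : meet (cl z) (opn z) = bot.
Proof.
  apply SlT_eq; intros p. rewrite Sl_bot_iff. split.
  - intros H. pose proof (H (cl z) (or_introl eq_refl)) as Hz.
    pose proof (H (opn z) (or_intror eq_refl)) as Ho. simpl in Hz, Ho; unfold oset in Ho.
    rewrite Ho. apply imp_top; assumption.
  - intros -> S [-> | ->]; simpl; [apply top_max|].
    unfold oset. symmetry; apply imp_top; [exact HO | apply top_max].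
Qed.

Lemma cl_opn_join z : join (cl z) (opn z) = top.
Proof.
  apply le_antisym; [apply top_max|]. intros p _.
  apply Sl_join_iff, basic_diag, HO.
Qed.

Lemma cl_complemented u : complemented (cl u).
Proof. exists (opn u); split; [apply cl_opn_meet | apply cl_opn_join]. Qed.

(* S \/ /\A contains p: take s the least point of S above p; then p = s /\ (s -> p)
   and s -> p lies in every T in A. *)
Lemma Sl_coframe : is_coframe (Sl O).
Proof.
  intros S A. apply le_antisym.
  - apply inf_greatest; intros y [T [HT ->]].
    apply join_mono; [apply le_refl | apply inf_lb; exact HT].
  - intros p Hp. apply Sl_join_iff.
    set (s := inf (fun s => proj1_sig S s /\ le p s)).
    assert (Hps : le p s) by (apply inf_greatest; intros x [_ Hx]; exact Hx).
    exists s, (imp s p).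
    split; [apply (proj1 (proj2_sig S)); intros x [Hx _]; exact Hx|].
    split.
    + intros T HT.
      destruct (proj1 (Sl_join_iff S T p) (Hp _ (ex_intro _ T (conj HT eq_refl))))
        as [m [n [Hm [Hn E]]]].
      assert (Hsm : le s m) by (apply inf_lb; split; [exact Hm | rewrite E; apply meet_lb_l]).
      rewrite E, (imp_meet_of_le HO s m n Hsm).
      apply (proj2 (proj2_sig T)); exact Hn.
    + apply le_antisym; [apply meet_glb; [exact Hps | apply le_imp, HO] | apply imp_mp, HO].
Qed.

Lemma Sl_topcoframe : is_topcoframe (Sl O) (ClS O).
Proof.
  split; [exact Sl_coframe|].
  split; [intros S [u ->]; apply cl_complemented|].
  split; [exists top; symmetry; apply cl_top|].
  split; [exists bot; symmetry; apply cl_bot|].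
  split; intros S T [u ->] [v ->]; [exists (join u v); apply cl_join | exists (meet u v); apply cl_meet].
Qed.

Lemma Sl_strong : is_strong (Sl O) (ClS O).
Proof.
  intros A HA. exists (sup (fun u => A (cl u))). apply SlT_eq; intros p; split.
  - intros H. apply sup_least; intros u Hu; exact (H (cl u) Hu).
  - intros H S HS. destruct (HA S HS) as [u ->].
    eapply le_trans; [exact (sup_ub (fun u => A (cl u)) u HS) | exact H].
Qed.

Definition sub_basic (S : Sl O) a b : Prop := forall q, proj1_sig S q -> basic a b q.

Lemma sub_basic_join (S T : Sl O) a a' b b' :
  sub_basic S a b -> sub_basic T a' b' -> sub_basic (join S T) (meet a a') (join b b').
Proof.
  intros HS HT q Hq. apply Sl_join_iff in Hq. destruct Hq as [m [n [Hm [Hn ->]]]].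
  apply (sublocale_meet (basic (meet a a') (join b b'))); [apply sublocale_basic, HO | |].
  - apply (basic_anti HO a _ b); [apply meet_lb_l | apply join_ub_l | apply HS, Hm].
  - apply (basic_anti HO a' _ b'); [apply meet_lb_r | apply join_ub_r | apply HT, Hn].
Qed.

Lemma Sl_basic_repr (S : Sl O) :
  S = inf (fun T => exists a b, sub_basic S a b /\ T = join (cl a) (opn b)).
Proof.
  apply SlT_eq; intros p; split.
  - intros Hp T [a [b [Hab ->]]]. apply Sl_join_iff, Hab, Hp.
  - intros H. apply sublocale_basic_repr; [exact HO | apply proj2_sig|].
    intros a b Hab. apply (Sl_join_iff (cl a) (opn b)).
    apply H; exists a, b; split; [exact Hab | reflexivity].
Qed.

End SublocaleCoframe.

Definition frame_hom_op {M L : CLat} (F : M -> L) : Prop :=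
  (forall A : M -> Prop, F (sup A) = inf (image F A)) /\
  F top = bot /\
  (forall x y : M, F (meet x y) = join (F x) (F y)).

Lemma frame_hom_op_precomp {K M L : CLat} (phi : K -> M) (F : M -> L) :
  frame_hom phi -> frame_hom_op F -> frame_hom_op (fun x => F (phi x)).
Proof.
  intros [Ps [Pt Pm]] [Fs [Ft Fm]]. split; [|split].
  - intros A. rewrite Ps, Fs, (image_comp F phi). reflexivity.
  - rewrite Pt; exact Ft.
  - intros x y. rewrite Pm; apply Fm.
Qed.

Lemma frame_hom_op_postcomp {K M L : CLat} (F : K -> M) (g : M -> L) :
  frame_hom_op F -> coframe_hom g -> frame_hom_op (fun x => g (F x)).
Proof.
  intros [Fs [Ft Fm]] [Gi [Gb Gj]]. split; [|split].
  - intros A. rewrite Fs, Gi, (image_comp g F). reflexivity.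
  - rewrite Ft; exact Gb.
  - intros x y. rewrite Fm; apply Gj.
Qed.

Lemma frame_hom_op_cl {O : CLat} : is_frame O -> frame_hom_op (@cl O).
Proof.
  intros HO. split; [apply cl_sup | split; [apply cl_top|]].
  intros x y; symmetry; apply cl_meet, HO.
Qed.

Lemma coframe_hom_meet {L M : CLat} (g : L -> M) :
  coframe_hom g -> forall x y, g (meet x y) = meet (g x) (g y).
Proof.
  intros [Hg _] x y. unfold meet at 1. rewrite Hg.
  apply inf_ext; intros; apply image_pair.
Qed.

Lemma coframe_hom_top {L M : CLat} (g : L -> M) : coframe_hom g -> g top = top.
Proof.
  intros [Hg _]. rewrite <- inf_empty, Hg, <- inf_empty.
  apply inf_ext; intros z; split; [intros [x [[] _]] | intros []].
Qed.

Lemma frame_hom_inverse {A B : CLat} (e : A -> B) (psi : B -> A) :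
  frame_hom e -> (forall u, psi (e u) = u) -> (forall x, e (psi x) = x) -> frame_hom psi.
Proof.
  intros [Hs [Ht Hm]] H1 H2. split; [|split].
  - intros P. rewrite <- (H1 (sup (image psi P))). f_equal.
    rewrite Hs, <- image_comp. f_equal.
    apply functional_extensionality; intros z; apply propositional_extensionality.
    split; [intros Hz; exists z; split; [exact Hz | symmetry; apply H2]|].
    intros [x [Hx ->]]; rewrite H2; exact Hx.
  - rewrite <- Ht; apply H1.
  - intros x y. rewrite <- (H1 (meet (psi x) (psi y))), Hm, !H2. reflexivity.
Qed.

Section Universal.
Context {O L : CLat} (HO : is_frame O) (HL : is_coframe L) (F : O -> L)
  (HF : frame_hom_op F) (F_compl : forall u, complemented (F u)).

Let F_sup : forall A, F (sup A) = inf (image F A) := proj1 HF.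
Let F_top : F top = bot := proj1 (proj2 HF).
Let F_meet : forall x y, F (meet x y) = join (F x) (F y) := proj2 (proj2 HF).

Let N (z : O) : L := complement (F z).
Let N_meet z : meet (F z) (N z) = bot := proj1 (complement_spec HL _ (F_compl z)).
Let N_join z : join (F z) (N z) = top := proj2 (complement_spec HL _ (F_compl z)).

Lemma F_anti x y : le x y -> le (F y) (F x).
Proof.
  intros H. replace x with (meet x y) at 1.
  - rewrite F_meet. apply join_ub_r.
  - apply le_antisym; [apply meet_lb_l | apply meet_glb; [apply le_refl | exact H]].
Qed.

Lemma F_join x y : F (join x y) = meet (F x) (F y).
Proof. unfold join at 1; rewrite F_sup. apply inf_ext; intros; apply image_pair. Qed.

Lemma N_bot : N bot = bot.
Proof.
  assert (F_bot : F bot = top).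
  { rewrite <- sup_empty, F_sup, <- inf_empty.
    apply inf_ext; intros z; split; [intros [x [[] _]] | intros []]. }
  pose proof (N_meet bot) as H. rewrite F_bot, meet_top_l in H. exact H.
Qed.

Lemma meet_F_N_le_F_imp b p : le (meet (F p) (N b)) (F (imp b p)).
Proof.
  eapply le_trans; [|apply (meet_join_disjoint_le HL (F b) (N b) _ (N_meet b))].
  apply meet_mono; [|apply le_refl].
  rewrite <- F_meet. apply F_anti, imp_mp, HO.
Qed.

Let basic_val (a b : O) : L := join (F a) (N b).

(* With Y the left side, let P be the largest point with Y /\ F z <= F P.  P lies in
   every c(a) \/ o(b) of K, hence in c(x) \/ o(z); as z <= P this gives x <= P, so
   Y /\ F z <= F x, and Y <= F x \/ N z since N z complements F z. *)
Lemma inf_basic_val_le (K : O -> O -> Prop) x z :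
  (forall p, (forall a b, K a b -> basic a b p) -> basic x z p) ->
  le (inf (fun y => exists a b, K a b /\ y = basic_val a b)) (basic_val x z).
Proof.
  intros H. set (Y := inf (fun y => exists a b, K a b /\ y = basic_val a b)).
  set (P := sup (fun p => le (meet Y (F z)) (F p))).
  assert (HYP : le (meet Y (F z)) (F P)).
  { unfold P; rewrite F_sup. apply inf_greatest; intros w [p [Hp ->]]; exact Hp. }
  assert (HzP : le z P) by (apply sup_ub, meet_lb_r).
  assert (HP : basic x z P).
  { apply H. intros a b Hab. apply basic_iff; [exact HO|]. apply sup_ub.
    rewrite F_meet, F_join.
    eapply le_trans; [|apply join_mono; [apply le_refl | apply meet_F_N_le_F_imp]].
    eapply le_trans; [|apply meet_join_distr_le, HL]. apply meet_glb; [exact HYP|].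
    eapply le_trans; [apply meet_lb_l | apply inf_lb; exists a, b; split; [exact Hab | reflexivity]]. }
  apply (le_join_of_meet_le HL (F z) (N z) Y (F x) (N_join z)).
  eapply le_trans; [exact HYP | apply F_anti, (le_of_basic HO x z); assumption].
Qed.

Definition extend (S : Sl O) : L :=
  inf (fun y => exists a b, sub_basic S a b /\ y = basic_val a b).

Lemma extend_mono (S T : Sl O) : le S T -> le (extend S) (extend T).
Proof.
  intros HST. apply inf_greatest; intros y [a [b [H ->]]].
  apply inf_lb; exists a, b; split; [|reflexivity].
  intros q Hq; apply H, HST, Hq.
Qed.

Lemma inf_basic_val_le_extend (K : O -> O -> Prop) (S : Sl O) :
  (forall p, (forall a b, K a b -> basic a b p) -> proj1_sig S p) ->
  le (inf (fun y => exists a b, K a b /\ y = basic_val a b)) (extend S).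
Proof.
  intros HK. apply inf_greatest; intros y [a [b [Hab ->]]].
  apply inf_basic_val_le. intros p Hp. apply Hab, HK, Hp.
Qed.

Lemma extend_cl u : extend (cl u) = F u.
Proof.
  apply le_antisym.
  - eapply le_trans; [apply inf_lb; exists u, bot; split; [|reflexivity]|].
    + intros q Hq; apply basic_bot; [exact HO | exact Hq].
    + unfold basic_val; rewrite N_bot, join_bot_r; apply le_refl.
  - eapply le_trans; [|apply (inf_basic_val_le_extend (fun a b => a = u /\ b = bot))].
    + apply inf_greatest; intros y [a [b [[-> ->] ->]]]. apply join_ub_l.
    + intros p Hp. apply (le_of_basic HO u bot p (bot_min p)), Hp; split; reflexivity.
Qed.

Lemma extend_inf (A : Sl O -> Prop) : extend (inf A) = inf (image extend A).
Proof.
  apply le_antisym.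
  - apply inf_greatest; intros y [S [HS ->]]; apply extend_mono, inf_lb, HS.
  - eapply le_trans;
      [|apply (inf_basic_val_le_extend (fun a b => exists S, A S /\ sub_basic S a b))].
    + apply inf_greatest; intros y [a [b [[S [HS Hab]] ->]]].
      eapply le_trans; [apply inf_lb; exists S; split; [exact HS | reflexivity]|].
      apply inf_lb; exists a, b; split; [exact Hab | reflexivity].
    + intros p Hp S HS. apply sublocale_basic_repr; [exact HO | apply proj2_sig|].
      intros a b Hab. apply Hp; exists S; split; assumption.
Qed.

Lemma extend_bot : extend bot = bot.
Proof.
  apply le_bot_eq. eapply le_trans; [apply inf_lb; exists top, bot; split; [|reflexivity]|].
  - intros q Hq; apply Sl_bot_iff in Hq; subst q. apply basic_iff; [exact HO | apply top_max].
  - unfold basic_val; rewrite F_top, N_bot, join_bot_r; apply le_refl.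
Qed.

Lemma basic_val_meet_join_le a a' b b' :
  le (basic_val (meet a a') (join b b')) (join (basic_val a b) (basic_val a' b')).
Proof.
  unfold basic_val. rewrite F_meet. apply join_lub; [apply join_lub|].
  - eapply le_trans; [apply join_ub_l | apply join_ub_l].
  - eapply le_trans; [apply join_ub_l | apply join_ub_r].
  - apply le_trans with (join (N b) (N b')); [|apply join_mono; apply join_ub_r].
    apply (compl_meet_le HL (F b) (F b')); [rewrite <- F_join; apply N_meet | apply N_join | apply N_join].
Qed.

Lemma extend_join (S T : Sl O) : extend (join S T) = join (extend S) (extend T).
Proof.
  apply le_antisym.
  - apply (join_inf_inf HL). intros p q [a [b [Hab ->]]] [a' [b' [Hab' ->]]].
    eapply le_trans; [|apply basic_val_meet_join_le].
    apply inf_lb; exists (meet a a'), (join b b'); split; [|reflexivity].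
    apply sub_basic_join; assumption.
  - apply join_lub; apply extend_mono; [apply join_ub_l | apply join_ub_r].
Qed.

Lemma extend_unique (g : Sl O -> L) :
  coframe_hom g -> (forall u, g (cl u) = F u) -> extend = g.
Proof.
  intros Hg Hgcl.
  assert (Hbasic : forall a b, g (join (cl a) (opn HO b)) = basic_val a b).
  { intros a b. rewrite (proj2 (proj2 Hg)), Hgcl. unfold basic_val; f_equal.
    apply (compl_unique HL (F b)); [| |apply N_meet | apply N_join].
    - rewrite <- Hgcl, <- coframe_hom_meet, cl_opn_meet by exact Hg. exact (proj1 (proj2 Hg)).
    - rewrite <- Hgcl, <- (proj2 (proj2 Hg)), cl_opn_join. apply coframe_hom_top, Hg. }
  apply functional_extensionality; intros S.
  rewrite (Sl_basic_repr HO S) at 2. rewrite (proj1 Hg). apply inf_ext; intros y; split.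
  - intros [a [b [Hab ->]]]. exists (join (cl a) (opn HO b)).
    split; [exists a, b; split; [exact Hab | reflexivity] | symmetry; apply Hbasic].
  - intros [T [[a [b [Hab ->]]] ->]]. exists a, b; split; [exact Hab | apply Hbasic].
Qed.

Theorem Sl_universal : exists! g : Sl O -> L, coframe_hom g /\ forall u, g (cl u) = F u.
Proof.
  exists extend. split.
  - split; [split; [exact extend_inf | split; [exact extend_bot | exact extend_join]] | exact extend_cl].
  - intros g [Hg Hgcl]. apply extend_unique; assumption.
Qed.

End Universal.

Section StrongTopCoframe.
Context {L : CLat} {C : L -> Prop} (HT : is_topcoframe L C) (HS : is_strong L C).

Lemma C_of_InfC x : InfC L C x -> C x.
Proof. intros [A [HA ->]]; apply HS, HA. Qed.

Lemma InfC_of_C x : C x -> InfC L C x.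
Proof.
  intros H; exists (fun y => y = x); split; [intros y ->; exact H|].
  apply le_antisym; [apply inf_greatest; intros y ->; apply le_refl | apply inf_lb; reflexivity].
Qed.

Lemma InfCop_top_val : proj1_sig (top : InfCop L C) = bot.
Proof.
  apply le_bot_eq, inf_lb.
  exists (exist _ bot (InfC_of_C bot (proj1 (proj2 (proj2 HT))))); split; [exact I | reflexivity].
Qed.

Lemma InfCop_meet_val (x y : InfCop L C) :
  proj1_sig (meet x y) = join (proj1_sig x) (proj1_sig y).
Proof.
  apply le_antisym.
  - apply inf_lb. split.
    + apply InfC_of_C, (proj2 (proj2 (proj2 (proj2 (proj2 HT))))); apply C_of_InfC, proj2_sig.
    + intros a [-> | ->]; [apply join_ub_l | apply join_ub_r].
  - apply inf_greatest; intros z [_ Hz]. apply join_lub; apply Hz; auto.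
Qed.

Lemma frame_hom_op_val : frame_hom_op (fun x : InfCop L C => proj1_sig x).
Proof.
  split; [reflexivity | split; [exact InfCop_top_val | exact InfCop_meet_val]].
Qed.

Lemma InfCop_frame : is_frame (InfCop L C).
Proof.
  intros x A. apply InfCT_eq. rewrite InfCop_meet_val. simpl.
  rewrite (proj1 HT). apply inf_ext; intros z; split.
  - intros [v [[a [Ha ->]] ->]]. exists (meet x a); split; [exists a; split; [exact Ha | reflexivity]|].
    symmetry; apply InfCop_meet_val.
  - intros [a [[b [Hb ->]] ->]]. exists (proj1_sig b); split; [exists b; split; [exact Hb | reflexivity]|].
    apply InfCop_meet_val.
Qed.

Lemma frame_hom_of_op_val {M : CLat} (h : M -> InfCop L C) :
  frame_hom_op (fun x => proj1_sig (h x)) -> frame_hom h.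
Proof.
  intros [Hs [Ht Hm]]. split; [|split].
  - intros A. apply InfCT_eq. rewrite Hs, (image_comp (fun y : InfCop L C => proj1_sig y) h).
    reflexivity.
  - apply InfCT_eq. rewrite Ht. symmetry; exact InfCop_top_val.
  - intros x y. apply InfCT_eq. rewrite Hm. symmetry; apply InfCop_meet_val.
Qed.

End StrongTopCoframe.

Lemma InfCop_restrict (L : CLat) (C : L -> Prop) (M : CLat) (D : M -> Prop) (g : L -> M) :
  is_topcoframe L C -> is_strong L C -> is_topcoframe M D -> is_strong M D ->
  topcoframe_hom C D g ->
  exists h : InfCop L C -> InfCop M D,
    frame_hom h /\ forall x, proj1_sig (h x) = g (proj1_sig x).
Proof.
  intros HTC HSC HTD HSD [Hg HgC].
  exists (fun x : InfCop L C => exist (InfC M D) (g (proj1_sig x))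
           (InfC_of_C _ (HgC _ (C_of_InfC HSC _ (proj2_sig x)))) : InfCop M D).
  split; [|reflexivity].
  apply (frame_hom_of_op_val HTD HSD).
  apply (frame_hom_op_postcomp (fun x : InfCop L C => proj1_sig x) g); [|exact Hg].
  apply frame_hom_op_val; assumption.
Qed.

Lemma Sl_map_unique (O P : CLat) (phi : O -> P) :
  is_frame O -> is_frame P -> frame_hom phi ->
  exists! g : Sl O -> Sl P, coframe_hom g /\ forall u, g (cl u) = cl (phi u).
Proof.
  intros HO HP Hphi.
  apply (Sl_universal HO (Sl_coframe HP) (fun u => cl (phi u))).
  - apply frame_hom_op_precomp; [exact Hphi | apply frame_hom_op_cl, HP].
  - intros u; apply cl_complemented, HP.
Qed.

Lemma Sl_adjunction (O L : CLat) (C : L -> Prop) :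
  is_frame O -> is_topcoframe L C -> is_strong L C ->
  forall f : O -> InfCop L C, frame_hom f ->
    exists! g : Sl O -> L,
      topcoframe_hom (ClS O) C g /\ forall u, g (cl u) = proj1_sig (f u).
Proof.
  intros HO HT HS f Hf.
  assert (HfC : forall u, C (proj1_sig (f u))) by (intros u; apply (C_of_InfC HS), proj2_sig).
  destruct (Sl_universal HO (proj1 HT) (fun u => proj1_sig (f u))) as [g [[Hg Hgcl] Huniq]].
  - apply frame_hom_op_precomp; [exact Hf | apply frame_hom_op_val; assumption].
  - intros u; apply (proj1 (proj2 HT)), HfC.
  - exists g. split; [split; [split; [exact Hg|] | exact Hgcl]|].
    + intros S [u ->]. rewrite Hgcl. apply HfC.
    + intros g' [[Hg' _] Hg'cl]. apply Huniq; split; assumption.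
Qed.

Lemma cl_unit_iso (O : CLat) : is_frame O ->
  exists e : O -> InfCop (Sl O) (ClS O),
    (forall u, proj1_sig (e u) = cl u) /\ frame_hom e /\
    exists psi : InfCop (Sl O) (ClS O) -> O,
      frame_hom psi /\ (forall u, psi (e u) = u) /\ (forall x, e (psi x) = x).
Proof.
  intros HO.
  pose proof (Sl_topcoframe HO) as HT. pose proof (Sl_strong (O := O)) as HS.
  set (e := fun u : O =>
    exist (InfC (Sl O) (ClS O)) (cl u) (InfC_of_C _ (ex_intro _ u eq_refl)) : InfCop (Sl O) (ClS O)).
  set (psi := fun x : InfCop (Sl O) (ClS O) => inf (proj1_sig (proj1_sig x))).
  assert (He : frame_hom e) by exact (frame_hom_of_op_val HT HS e (frame_hom_op_cl HO)).
  assert (Hpsi : forall u, psi (e u) = u) by (intros u; apply inf_up).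
  assert (Hepsi : forall x, e (psi x) = x).
  { intros [S HSx]. apply InfCT_eq. destruct (C_of_InfC HS _ HSx) as [u ->].
    simpl. f_equal. apply inf_up. }
  exists e. split; [reflexivity|]. split; [exact He|].
  exists psi. split; [exact (frame_hom_inverse e psi He Hpsi Hepsi) | split; assumption].
Qed.

Theorem mainTheorem17 :
  (* Sl sends frames to strong topological coframes *)
  (forall O : CLat, is_frame O ->
     is_topcoframe (Sl O) (ClS O) /\ is_strong (Sl O) (ClS O)) /\
  (* /\C^op sends strong topological coframes to frames ... *)
  (forall (L : CLat) (C : L -> Prop), is_topcoframe L C -> is_strong L C ->
     is_frame (InfCop L C)) /\
  (* ... and morphisms (by restriction) to frame morphisms *)
  (forall (L : CLat) (C : L -> Prop) (M : CLat) (D : M -> Prop) (g : L -> M),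
     is_topcoframe L C -> is_strong L C -> is_topcoframe M D -> is_strong M D ->
     topcoframe_hom C D g ->
     exists h : InfCop L C -> InfCop M D,
       frame_hom h /\ forall x, proj1_sig (h x) = g (proj1_sig x)) /\
  (* Sl on morphisms: the unique coframe morphism with c(u) |-> c(phi u) *)
  (forall (O P : CLat) (phi : O -> P), is_frame O -> is_frame P -> frame_hom phi ->
     exists! g : Sl O -> Sl P, coframe_hom g /\ forall u, g (cl u) = cl (phi u)) /\
  (* universal property of the unit u |-> c(u) (Sl is left adjoint to /\C^op) *)
  (forall (O : CLat) (L : CLat) (C : L -> Prop),
     is_frame O -> is_topcoframe L C -> is_strong L C ->
     forall f : O -> InfCop L C, frame_hom f ->
       exists! g : Sl O -> L,
         topcoframe_hom (ClS O) C g /\ forall u, g (cl u) = proj1_sig (f u)) /\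
  (* the unit is an isomorphism of frames *)
  (forall O : CLat, is_frame O ->
     exists e : O -> InfCop (Sl O) (ClS O),
       (forall u, proj1_sig (e u) = cl u) /\ frame_hom e /\
       exists psi : InfCop (Sl O) (ClS O) -> O,
         frame_hom psi /\ (forall u, psi (e u) = u) /\ (forall x, e (psi x) = x)).
Proof.
  split; [|split; [|split; [|split; [|split]]]].
  - intros O HO; split; [exact (Sl_topcoframe HO) | exact Sl_strong].
  - exact @InfCop_frame.
  - exact InfCop_restrict.
  - exact Sl_map_unique.
  - exact Sl_adjunction.
  - exact cl_unit_iso.
Qed.
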